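(* Let $1\le k\le d$ and let $\{U_1,\dots,U_k\}$ be a collection of independent open balls in $\mathbb R^d$. Then every interval $[\sigma,\tau]\subseteq 2^{[k]}$ is pierceable at some point in the realization $\{U_1,\dots,U_k\}$.
   Context: For sets $U_1,\dots,U_n\subseteq\mathbb R^d$, the atom of $\sigma\subseteq[n]$ is $\bigcap_{i\in\sigma}U_i\setminus\bigcup_{j\in[n]\setminus\sigma}U_j$ (empty intersection meaning $\mathbb R^d$), and the code of the collection is the set of $\sigma$ with nonempty atom; the collection realizes that code. A collection of open balls $\{U_1,\dots,U_k\}$ is independent if its code is all of $2^{[k]}$. For $\sigma\subseteq\tau$, $[\sigma,\tau]=\{\gamma:\sigma\subseteq\gamma\subseteq\tau\}$. Given a realization $\mathcal U$ of a code $\mathcal C$ in $\mathbb R^d$, an interval $[\sigma,\tau]\subseteq\mathcal C$ is pierceable at $p\in\mathbb R^d$ if the codewords whose atoms meet every sufficiently small neighborhood of $p$ are exactly those in $[\sigma,\tau]$; equivalently, $p$ is a limit point of the atom of every codeword in $[\sigma,\tau]$ and of no other atom. *)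

From mathcomp Require Import all_boot all_order all_algebra.
From mathcomp Require Import reals.
Set Implicit Arguments. Unset Strict Implicit. Unset Printing Implicit Defensive.
Import Order.TTheory GRing.Theory Num.Theory.
Local Open Scope ring_scope.

Section Defs.
Variables (R : realType) (d : nat).

Definition sqdist (x y : 'rV[R]_d) : R := \sum_(i < d) (x 0 i - y 0 i) ^+ 2.

Definition open_ball (c : 'rV[R]_d) (r : R) : 'rV[R]_d -> Prop :=
  fun x => sqdist x c < r ^+ 2.

Variable n : nat.

Definition atom (U : 'I_n -> 'rV[R]_d -> Prop) (sigma : {set 'I_n})
  (x : 'rV[R]_d) : Prop := forall i : 'I_n, i \in sigma <-> U i x.

Definition code (U : 'I_n -> 'rV[R]_d -> Prop) : {set 'I_n} -> Prop :=
  fun sigma => exists x, atom U sigma x.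

Definition independent (U : 'I_n -> 'rV[R]_d -> Prop) : Prop :=
  forall sigma : {set 'I_n}, code U sigma.

Definition in_interval (sigma tau gamma : {set 'I_n}) : Prop :=
  sigma \subset gamma /\ gamma \subset tau.

(* the atom of gamma meets every (sufficiently small) neighborhood of p,
   i.e. p lies in the closure of the atom *)
Definition atom_near (U : 'I_n -> 'rV[R]_d -> Prop) (gamma : {set 'I_n})
  (p : 'rV[R]_d) : Prop :=
  forall eps : R, 0 < eps -> exists y, atom U gamma y /\ sqdist y p < eps ^+ 2.

Definition pierceable (U : 'I_n -> 'rV[R]_d -> Prop) (sigma tau : {set 'I_n})
  (p : 'rV[R]_d) : Prop :=
  [/\ sigma \subset tau,
      (forall gamma, in_interval sigma tau gamma -> code U gamma) &
      (forall gamma : {set 'I_n}, code U gamma ->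
          (atom_near U gamma p <-> in_interval sigma tau gamma))].

End Defs.

From mathcomp Require Import all_boot all_order all_algebra.
From mathcomp Require Import reals.
From mathcomp.algebra_tactics Require Import ring lra.
Set Implicit Arguments. Unset Strict Implicit. Unset Printing Implicit Defensive.
Import Order.TTheory GRing.Theory Num.Theory.
Local Open Scope ring_scope.

(* Let [power w i = |w - c_i|^2 - r_i^2] be the power of [w] with respect to
   the i-th sphere. As k <= d, some u <> 0 is orthogonal to every c_i - c_j;
   moving along u shifts all powers by one common amount, which can be any
   nonnegative number. With the formula for the squared distance to a convex
   combination, this makes the set of power vectors (power w i)_i convex.
   Independence provides power vectors realising every sign pattern on
   J = tau \ sigma (negative on sigma, positive outside tau), and a convex set
   realising all sign patterns on J contains a vector vanishing on J
   (induction on |J|). Its point p lies inside the balls of sigma, on the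
   spheres of J and outside the other balls: by continuity atoms near p lie in
   [sigma, tau], and every atom of [sigma, tau] is reached arbitrarily close to
   p along a convex combination of power vectors. *)

Section ConvexSignPatterns.
Variables (R : realFieldType) (T : finType).

Definition convex_set (K : (T -> R) -> Prop) :=
  forall a b (m : R), K a -> K b -> 0 <= m <= 1 ->
    K (fun i => m * a i + (1 - m) * b i).

Lemma comb_lt0 (m x y : R) : 0 <= m <= 1 -> (x < 0) = (y < 0) ->
  (m * x + (1 - m) * y < 0) = (x < 0).
Proof.
case/andP=> m0 m1; case: (ltP x 0) => hx; case: (ltP y 0) => hy //= _.
  by apply/idP; nra.
by apply/negbTE; rewrite -leNgt; nra.
Qed.

Lemma convex_zero_of_sign_patterns (J : {set T}) (K : (T -> R) -> Prop) :
  convex_set K ->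
  (forall S : {set T}, S \subset J ->
     exists2 v, K v & forall i, i \in J -> (v i < 0) = (i \in S)) ->
  exists2 v, K v & forall i, i \in J -> v i = 0.
Proof.
have [n] := ubnP #|J|; elim: n J K => // n IH J K cardJ convK patterns.
have [->|[i0 i0J]] := set_0Vmem J.
  by have [v Kv _] := patterns set0 (sub0set _); exists v => // i; rewrite inE.
pose K0 v := K v /\ v i0 = 0.
have convK0 : convex_set K0.
  move=> a b m [Ka a0] [Kb b0] m01.
  by split; [exact: convK | rewrite /= a0 b0; ring].
have patterns0 (S : {set T}) : S \subset J :\ i0 ->
    exists2 v, K0 v & forall i, i \in J :\ i0 -> (v i < 0) = (i \in S).
  move=> SJ0; have SJ : S \subset J := subset_trans SJ0 (subD1set J i0).
  have i0S : i0 \notin S by apply/negP => /(subsetP SJ0); rewrite !inE eqxx.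
  have i0SJ : i0 |: S \subset J by rewrite subUset sub1set i0J.
  have [a Ka a_sign] := patterns (i0 |: S) i0SJ.
  have [b Kb b_sign] := patterns S SJ.
  have a0 : a i0 < 0 by rewrite a_sign // setU11.
  have b0 : 0 <= b i0 by rewrite leNgt b_sign // (negbTE i0S).
  (* the point where the segment from [b] to [a] crosses [v i0 = 0] *)
  pose m := b i0 / (b i0 - a i0).
  have m01 : 0 <= m <= 1 by rewrite divr_ge0 ?ler_pdivrMr /=; lra.
  exists (fun i => m * a i + (1 - m) * b i).
    by split; [exact: convK | rewrite /m; field; lra].
  move=> i; rewrite !inE => /andP[ne iJ].
  have ab : (a i < 0) = (b i < 0) by rewrite a_sign // b_sign // !inE (negbTE ne).
  by rewrite comb_lt0 // ab b_sign.
have [|v [Kv vi0] v0] := IH (J :\ i0) K0 _ convK0 patterns0.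
  by move: cardJ; rewrite (cardsD1 i0) i0J.
exists v => // i iJ; have [->|ne] := eqVneq i i0; first exact: vi0.
by apply: v0; rewrite !inE ne.
Qed.

End ConvexSignPatterns.

Section SquaredDistance.
Variables (R : realType) (d : nat).
Implicit Types (x y z w u : 'rV[R]_d).

Definition dot x y : R := \sum_a x 0 a * y 0 a.

Lemma dotC x y : dot x y = dot y x.
Proof. by apply: eq_bigr => a _; rewrite mulrC. Qed.

Lemma dotrN x y : dot x (- y) = - dot x y.
Proof. by rewrite /dot -sumrN; apply: eq_bigr => a _; rewrite mxE mulrN. Qed.

Lemma dotNN x : dot (- x) (- x) = dot x x.
Proof. by rewrite dotrN dotC dotrN opprK. Qed.

Lemma dot_self_gt0 u : u != 0 -> 0 < dot u u.
Proof.
move=> u_neq0; rewrite lt_def sumr_ge0 ?andbT => [|a _]; last first.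
  by rewrite -expr2 sqr_ge0.
apply: contraNneq u_neq0 => /psumr_eq0P uu0; apply/eqP/rowP => a.
by apply/eqP; rewrite mxE -sqrf_eq0 expr2 uu0 // => b _; rewrite -expr2 sqr_ge0.
Qed.

Lemma sqdist_ge0 x y : 0 <= sqdist x y.
Proof. by apply: sumr_ge0 => a _; apply: sqr_ge0. Qed.

Lemma sqdistxx x : sqdist x x = 0.
Proof. by apply: big1 => a _; rewrite subrr expr0n. Qed.

Lemma sqdist_comb x y z (m : R) :
  sqdist (m *: x + (1 - m) *: y) z =
  m * sqdist x z + (1 - m) * sqdist y z - m * (1 - m) * sqdist x y.
Proof.
rewrite /sqdist !mulr_sumr -big_split -sumrB /=; apply: eq_bigr => a _.
by rewrite !mxE; ring.
Qed.

Lemma sqdist_shift w u z (t : R) :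
  sqdist (w + t *: u) z =
  sqdist w z + 2 * t * (dot w u - dot z u) + t ^+ 2 * dot u u.
Proof.
rewrite /sqdist /dot -sumrB !mulr_sumr -!big_split /=; apply: eq_bigr => a _.
by rewrite !mxE; ring.
Qed.

Lemma sqdist_triangle2 x y z : sqdist x z <= 2 * sqdist x y + 2 * sqdist y z.
Proof.
rewrite /sqdist !mulr_sumr -big_split /=; apply: ler_sum => a _.
have := sqr_ge0 (x 0 a - 2 * y 0 a + z 0 a); nra.
Qed.

Lemma sqdist_diff_le x y z (e : R) : 0 < e ->
  `|sqdist y z - sqdist x z| <= (1 + e^-1) * sqdist y x + e * sqdist x z.
Proof.
move=> e_gt0; rewrite /sqdist -sumrB !mulr_sumr -big_split /=.
apply: le_trans (ler_norm_sum _ _ _) _; apply: ler_sum => a _.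
set p := y 0 a - x 0 a; set q := x 0 a - z 0 a.
have -> : y 0 a - z 0 a = p + q by rewrite /p /q; ring.
(* AM-GM: [2 |p q| <= p^2 / e + e q^2] *)
have amgm (s : R) :
    0 <= e^-1 * p ^+ 2 + s * 2 * p * q + s ^+ 2 * e * q ^+ 2.
  have -> : e^-1 * p ^+ 2 + s * 2 * p * q + s ^+ 2 * e * q ^+ 2 =
            e^-1 * (p + s * e * q) ^+ 2 by field; rewrite gt_eqF.
  by rewrite mulr_ge0 ?sqr_ge0 // invr_ge0 ltW.
have := amgm 1; have := amgm (-1); rewrite sqrrN expr1n ler_norml.
by move=> h1 h2; apply/andP; split; nra.
Qed.

Lemma sqdist_near x z (g : R) : 0 < g ->
  exists2 e : R, 0 < e &
    forall y, sqdist y x < e ^+ 2 -> `|sqdist y z - sqdist x z| < g.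
Proof.
move=> g_gt0; set S := sqdist x z; have S_ge0 : 0 <= S := sqdist_ge0 x z.
pose e := g / (g + 2 + S).
have e_gt0 : 0 < e by rewrite divr_gt0 //; lra.
have e_lt1 : e < 1 by rewrite ltr_pdivrMr; lra.
have eS : e * (2 + S) < g by rewrite mulrAC ltr_pdivrMr; nra.
(* the deviation is below [e^2 + e + e S <= e (2 + S)] *)
exists e => // y yx; apply: le_lt_trans (sqdist_diff_le x y z e_gt0) _.
have : (1 + e^-1) * sqdist y x < (1 + e^-1) * e ^+ 2.
  by rewrite ltr_pM2l // ltr_wpDr // invr_ge0 ltW.
have -> : (1 + e^-1) * e ^+ 2 = e ^+ 2 + e by field; rewrite gt_eqF.
rewrite -/S; nra.
Qed.

End SquaredDistance.

Section Centers.
Variables (R : realType) (d k : nat) (c : 'I_k -> 'rV[R]_d).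
Hypotheses (k_gt0 : (0 < k)%N) (k_le_d : (k <= d)%N).

Lemma exists_normal_to_centers :
  exists2 u : 'rV[R]_d, 0 < dot u u & forall i j, dot (c i) u = dot (c j) u.
Proof.
pose i0 := Ordinal k_gt0.
pose M : 'M[R]_(d, k.-1) := \matrix_(a, j) (c (lift i0 j) 0 a - c i0 0 a).
have rankM : (\rank M < d)%N.
  by apply: leq_ltn_trans (rank_leq_col M) _; rewrite -ltnS prednK.
have /rowV0Pn[u /sub_kermxP uM u_neq0] : kermx M != 0.
  by rewrite -mxrank_eq0 mxrank_ker subn_eq0 -ltnNge.
exists u; first exact: dot_self_gt0.
suff dot_c i : dot (c i) u = dot (c i0) u by move=> i j; rewrite !dot_c.
case: (unliftP i0 i) => [j ->|-> //]; apply/eqP; rewrite -subr_eq0.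
have /matrixP/(_ 0 j) := uM; rewrite !mxE => <-; apply/eqP.
by rewrite /dot -sumrB; apply: eq_bigr => a _; rewrite !mxE; ring.
Qed.

Lemma raise_sqdists w (dl : R) : 0 <= dl ->
  exists2 w', forall i, sqdist w' (c i) = sqdist w (c i) + dl & sqdist w' w <= dl.
Proof.
move=> dl_ge0; have [u uu_gt0 dot_c] := exists_normal_to_centers.
pose i0 := Ordinal k_gt0.
wlog B_ge0 : u uu_gt0 dot_c / 0 <= dot w u - dot (c i0) u => [raise|].
  have [|B_lt0] := lerP 0 (dot w u - dot (c i0) u); first exact: raise.
  apply: (raise (- u)); first by rewrite dotNN.
    by move=> i j; rewrite !dotrN (dot_c i j).
  by rewrite !dotrN; lra.
set A := dot u u; set B := dot w u - dot (c i0) u in B_ge0 *.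
(* move along [u] by the nonnegative root [t] of [A t^2 + 2 B t = dl] *)
pose s := Num.sqrt (B ^+ 2 + A * dl).
have s2 : s ^+ 2 = B ^+ 2 + A * dl.
  by rewrite sqr_sqrtr // addr_ge0 ?sqr_ge0 ?mulr_ge0 // ltW.
pose t := (s - B) / A.
have t_ge0 : 0 <= t.
  rewrite divr_ge0 ?(ltW uu_gt0) // subr_ge0 -(ger0_norm B_ge0) -sqrtr_sqr.
  by rewrite ler_wsqrtr // lerDl mulr_ge0 // ltW.
have t_root : 2 * t * B + t ^+ 2 * A = dl.
  have -> : 2 * t * B + t ^+ 2 * A = (s ^+ 2 - B ^+ 2) / A.
    by rewrite /t; field; rewrite gt_eqF.
  by rewrite s2; field; rewrite gt_eqF.
exists (w + t *: u) => [i|].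
  by rewrite sqdist_shift (dot_c i i0) -/B -/A -addrA t_root.
by rewrite sqdist_shift sqdistxx subrr mulr0 add0r -/A; nra.
Qed.

Lemma sqdists_convex w1 w2 (m : R) : 0 <= m <= 1 ->
  exists2 w, forall i,
      sqdist w (c i) = m * sqdist w1 (c i) + (1 - m) * sqdist w2 (c i)
    & sqdist w w2 <= 2 * m * sqdist w1 w2.
Proof.
case/andP=> m_ge0 m_le1; set D := sqdist w1 w2.
have D_ge0 : 0 <= D := sqdist_ge0 w1 w2.
pose z := m *: w1 + (1 - m) *: w2.
have [|w wc wz] := raise_sqdists z (dl := m * (1 - m) * D).
  by rewrite !mulr_ge0 // subr_ge0.
exists w => [i|]; first by rewrite wc /z sqdist_comb -/D; ring.
have zw2 : sqdist z w2 = m ^+ 2 * D by rewrite /z sqdist_comb sqdistxx -/D; ring.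
have := sqdist_triangle2 w z w2; rewrite zw2; nra.
Qed.

End Centers.

Section Balls.
Variables (R : realType) (d k : nat) (c : 'I_k -> 'rV[R]_d) (r : 'I_k -> R).
Hypotheses (k_gt0 : (0 < k)%N) (k_le_d : (k <= d)%N).

Local Notation balls := (fun i => open_ball (c i) (r i)).

Definition power w i := sqdist w (c i) - r i ^+ 2.

Lemma atom_powerP (gamma : {set 'I_k}) w :
  atom balls gamma w <-> forall i, (power w i < 0) = (i \in gamma).
Proof.
split=> h i; last by rewrite /open_ball -h subr_lt0.
by rewrite subr_lt0; apply/idP/idP => /(h i).
Qed.

Lemma power_near p i : power p i != 0 ->
  exists2 e : R, 0 < e &
    forall y, sqdist y p < e ^+ 2 -> (power y i < 0) = (power p i < 0).
Proof.
move=> p_ne0; have [|e e_gt0 near] := sqdist_near p (c i) (g := `|power p i|).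
  by rewrite normr_gt0.
exists e => // y /near.
have -> : sqdist y (c i) - sqdist p (c i) = power y i - power p i.
  by rewrite /power; ring.
move: p_ne0; rewrite neq_lt => /orP[p_lt0|p_gt0].
  by rewrite (ltr0_norm p_lt0) ltr_norml p_lt0 => /andP[_ ?]; apply/idP; lra.
rewrite (gtr0_norm p_gt0) ltr_norml (lt_gtF p_gt0) => /andP[? _].
by apply/negbTE; rewrite -leNgt; lra.
Qed.

Lemma interval_of_atom_near (sigma tau gamma : {set 'I_k}) p :
  (forall i, (power p i < 0) = (i \in sigma)) ->
  (forall i, (power p i <= 0) = (i \in tau)) ->
  atom_near balls gamma p -> in_interval sigma tau gamma.
Proof.
move=> p_lt0 p_le0 near.
have sign_near i : power p i != 0 -> (power p i < 0) = (i \in gamma).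
  move=> p_ne0; have [e e_gt0 pe] := power_near p_ne0.
  by have [y [/atom_powerP <- /pe]] := near e e_gt0.
split; apply/subsetP => i.
  by rewrite -p_lt0 => lt0; rewrite -sign_near ?ltr0_neq0.
apply: contraLR; rewrite -p_le0 -ltNge => gt0.
by rewrite -sign_near ?lt0r_neq0 // lt_gtF.
Qed.

Lemma atom_near_of_interval (sigma tau gamma : {set 'I_k}) p :
  (forall i, (power p i < 0) = (i \in sigma)) ->
  (forall i, (power p i <= 0) = (i \in tau)) ->
  in_interval sigma tau gamma -> code balls gamma -> atom_near balls gamma p.
Proof.
move=> p_lt0 p_le0 [sigma_gamma gamma_tau] [y /atom_powerP y_atom] e e_gt0.
set D := sqdist y p; have D_ge0 : 0 <= D := sqdist_ge0 y p.
have e2_gt0 : 0 < e ^+ 2 by rewrite exprn_gt0.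
pose m := e ^+ 2 / (2 * (D + e ^+ 2)).
have m_gt0 : 0 < m by rewrite divr_gt0 //; lra.
have m_le1 : m <= 1 by rewrite ler_pdivrMr; lra.
have [|w wc wp] := sqdists_convex c k_gt0 k_le_d y p (m := m).
  by rewrite ltW.
exists w; split.
  apply/atom_powerP => i.
  have -> : power w i = m * power y i + (1 - m) * power p i.
    by rewrite /power wc; ring.
  have [i_gamma|i_gamma] := boolP (i \in gamma).
    have yi : power y i < 0 by rewrite y_atom.
    have pi : power p i <= 0 by rewrite p_le0 (subsetP gamma_tau).
    by apply/idP; nra.
  have yi : 0 <= power y i by rewrite leNgt y_atom.
  have pi : 0 <= power p i.
    by rewrite leNgt p_lt0; exact: contra (subsetP sigma_gamma i) i_gamma.
  by apply/negbTE; rewrite -leNgt; nra.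
apply: le_lt_trans wp _.
have -> : 2 * m * D = e ^+ 2 * (D / (D + e ^+ 2)) by rewrite /m; field; lra.
by rewrite -[ltRHS]mulr1 ltr_pM2l // ltr_pdivrMr; lra.
Qed.

Lemma atom_off_spheres (gamma : {set 'I_k}) : code balls gamma ->
  exists w, (forall i, (power w i < 0) = (i \in gamma)) /\
            (forall i, power w i != 0).
Proof.
case=> y /atom_powerP y_atom.
set slack := \big[Num.min/1]_(i in gamma) - power y i.
have slack_gt0 : 0 < slack by apply: lt_bigmin => // i; rewrite oppr_gt0 y_atom.
have [|w wc _] := raise_sqdists c k_gt0 k_le_d y (dl := slack / 2).
  by rewrite divr_ge0 // ltW.
have w_sign i : if i \in gamma then power w i < 0 else 0 < power w i.
  have -> : power w i = power y i + slack / 2 by rewrite /power wc; ring.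
  case: ifPn => i_gamma.
    have : slack <= - power y i by exact: bigmin_le_cond.
    lra.
  have : 0 <= power y i by rewrite leNgt y_atom.
  lra.
exists w; split=> i; have := w_sign i; case: ifP => i_gamma.
- by move=> ->.
- by move/lt_gtF.
- exact: ltr0_neq0.
- exact: lt0r_neq0.
Qed.

Lemma exists_piercing_point (sigma tau : {set 'I_k}) :
  independent balls -> sigma \subset tau ->
  exists p, (forall i, (power p i < 0) = (i \in sigma)) /\
            (forall i, (power p i <= 0) = (i \in tau)).
Proof.
move=> indep sigma_tau.
pose K v := [/\ exists w, forall i, v i = power w i,
                forall i, i \in sigma -> v i < 0 &
                forall i, i \notin tau -> 0 < v i].
have convK : convex_set K.
  move=> a b m [[wa a_w] a_sigma a_tau] [[wb b_w] b_sigma b_tau] m01.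
  have [w wc _] := sqdists_convex c k_gt0 k_le_d wa wb m01.
  case/andP: m01 => m_ge0 m_le1; split.
  - by exists w => i; rewrite a_w b_w /power wc; ring.
  - by move=> i /[dup] /a_sigma ? /b_sigma ?; nra.
  - by move=> i /[dup] /a_tau ? /b_tau ?; nra.
have patterns (S : {set 'I_k}) : S \subset tau :\: sigma ->
    exists2 v, K v & forall i, i \in tau :\: sigma -> (v i < 0) = (i \in S).
  move=> S_J; have [w [w_sign w_ne0]] := atom_off_spheres (indep (sigma :|: S)).
  exists (power w); last first.
    by move=> i; rewrite !inE w_sign inE => /andP[/negbTE ->].
  split=> [|i i_sigma|i i_tau]; first by exists w.
    by rewrite w_sign inE i_sigma.
  rewrite lt_neqAle eq_sym w_ne0 leNgt w_sign inE negb_or.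
  rewrite (contra (subsetP sigma_tau i) i_tau) /=.
  by apply: contra i_tau => /(subsetP S_J); rewrite inE => /andP[].
have [v [[p p_v] v_sigma v_tau] v0] := convex_zero_of_sign_patterns convK patterns.
exists p; split=> i; rewrite -p_v.
  have [i_sigma|i_sigma] := boolP (i \in sigma); first by rewrite v_sigma.
  have [i_tau|i_tau] := boolP (i \in tau); last by rewrite (lt_gtF (v_tau i i_tau)).
  have i_J : i \in tau :\: sigma by rewrite inE i_sigma i_tau.
  by rewrite v0 // ltxx.
have [i_tau|i_tau] := boolP (i \in tau); last by rewrite (lt_geF (v_tau i i_tau)).
have [i_sigma|i_sigma] := boolP (i \in sigma); first by rewrite ltW ?v_sigma.
have i_J : i \in tau :\: sigma by rewrite inE i_sigma i_tau.
by rewrite v0 // lexx.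
Qed.

Lemma pierceable_of_power_signs (sigma tau : {set 'I_k}) p :
  independent balls -> sigma \subset tau ->
  (forall i, (power p i < 0) = (i \in sigma)) ->
  (forall i, (power p i <= 0) = (i \in tau)) ->
  pierceable balls sigma tau p.
Proof.
move=> indep sigma_tau p_lt0 p_le0.
split=> [//|gamma _|gamma gamma_code]; first exact: indep.
split; first exact: interval_of_atom_near.
by move=> gamma_int; apply: atom_near_of_interval.
Qed.

End Balls.

Theorem lemma3p2 (R : realType) (d k : nat)
    (c : 'I_k -> 'rV[R]_d) (r : 'I_k -> R) :
  (1 <= k)%N -> (k <= d)%N ->
  (forall i, 0 < r i) ->
  independent (fun i => open_ball (c i) (r i)) ->
  forall sigma tau : {set 'I_k}, sigma \subset tau ->
  exists p : 'rV[R]_d,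
    pierceable (fun i => open_ball (c i) (r i)) sigma tau p.
Proof.
(* the radii need not be positive: only the signs of [power] matter *)
move=> k_gt0 k_le_d _ indep sigma tau sigma_tau.
have [p [p_lt0 p_le0]] := exists_piercing_point k_gt0 k_le_d indep sigma_tau.
by exists p; apply: pierceable_of_power_signs.
Qed.
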